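(* Let $A$ be a normalized real $n\times n$ matrix. For any two stationary points $x_1^\star,x_2^\star\in\Delta_n$ of $f_A$, $$|f_A(x_1^\star)-f_A(x_2^\star)|\le (x_1^\star-x_2^\star)^\tau A(x_1^\star-x_2^\star).$$
   Context: $\Delta_n=\{u\in\mathbb{R}^n:u\ge0,\ e^\tau u=1\}$ ($e$ the all-ones vector). A square matrix is normalized if its maximum entry is $1$ and its minimum entry is $0$. For $u\in\mathbb{R}^n$, $\max(u)$ is its largest entry. $f_A(x)=\max(Ax)-x^\tau Ax$ for $x\in\Delta_n$. For $x,x'\in\Delta_n$, $D_A(x',x)=\lim_{\epsilon\to0^+}\frac1\epsilon\big(f_A((1-\epsilon)x+\epsilon x')-f_A(x)\big)$ (this limit exists). A point $x^\star\in\Delta_n$ is a stationary point of $f_A$ if $D_A(x,x^\star)\ge0$ for all $x\in\Delta_n$. *)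

From HB Require Import structures.
From mathcomp Require Import all_boot all_order all_algebra.
From mathcomp Require Import all_classical all_reals all_analysis.
Set Implicit Arguments. Unset Strict Implicit. Unset Printing Implicit Defensive.
Import Order.TTheory GRing.Theory Num.Theory.
Import numFieldNormedType.Exports.
Local Open Scope ring_scope.

Definition simplex (R : realType) (n : nat) (u : 'cV[R]_n) : Prop :=
  (forall i, 0 <= u i 0) /\ \sum_(i < n) u i 0 = 1.

Definition normalized (R : realType) (n : nat) (A : 'M[R]_n) : Prop :=
  (forall i j, 0 <= A i j <= 1) /\
  (exists i j, A i j = 1) /\ (exists i j, A i j = 0).

(* max(u): largest entry (0 for the empty vector, irrelevant) *)
Definition vmax (R : realType) (n : nat) : 'cV[R]_n -> R :=
  match n return 'cV[R]_n -> R with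
  | 0 => fun _ => 0
  | m.+1 => fun u => \big[Num.max/u ord0 0]_(i < m.+1) u i 0
  end.

Definition qform (R : realType) (n : nat) (A : 'M[R]_n) (x : 'cV[R]_n) : R :=
  (x^T *m A *m x) 0 0.

Definition fA (R : realType) (n : nat) (A : 'M[R]_n) (x : 'cV[R]_n) : R :=
  vmax (A *m x) - qform A x.

Definition DA (R : realType) (n : nat) (A : 'M[R]_n) (x' x : 'cV[R]_n) : R :=
  lim ((fun eps : R => (fA A ((1 - eps) *: x + eps *: x') - fA A x) / eps)
         @ 0^'+)%classic.

Definition stationary (R : realType) (n : nat) (A : 'M[R]_n) (xs : 'cV[R]_n)
  : Prop :=
  simplex xs /\ forall x : 'cV[R]_n, simplex x -> 0 <= DA A x xs.

(* Along a segment x + e (y - x) the function f_A is vmax (A x + e A (y - x))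
   minus a quadratic in e.  Since vmax is convex, its difference quotient
   decreases as e -> 0+, so the directional derivative D_A(y, x) is at most
   vmax (A y) - vmax (A x) - (the linear coefficient of the quadratic).
   Stationarity of x thus bounds that linear coefficient, and expanding
   x_1^T A x_1 around x_2 (and vice versa) turns the two bounds into the two
   halves of the claimed inequality. *)
From mathcomp Require Import all_boot all_order all_algebra.
From mathcomp Require Import all_classical all_reals all_analysis.
From mathcomp Require Import ring lra.
Set Implicit Arguments. Unset Strict Implicit. Unset Printing Implicit Defensive.
Import Order.TTheory GRing.Theory Num.Theory.
Import numFieldNormedType.Exports.
Local Open Scope ring_scope.

Section VmaxConvexity.
Variables (R : realType) (m : nat).
Implicit Types (u v : 'cV[R]_m.+1).

Lemma le_vmax u i : u i 0 <= vmax u.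
Proof. exact: (le_bigmax _ (fun j => u j 0) i). Qed.

Lemma vmax_le u c : (forall i, u i 0 <= c) -> vmax u <= c.
Proof. by move=> ub; apply: bigmax_le => // i _; apply: ub. Qed.

Lemma vmax_attained u : exists k, vmax u = u k 0.
Proof.
have [k _ kmax] := @arg_maxP _ _ _ (ord0 : 'I_m.+1) xpredT (fun i => u i 0) isT.
exists k; apply/le_anti; rewrite le_vmax andbT.
by apply: vmax_le => i; apply: kmax.
Qed.

Lemma vmax_convex u v (t : R) : 0 <= t <= 1 ->
  vmax ((1 - t) *: u + t *: v) <= (1 - t) * vmax u + t * vmax v.
Proof.
move=> /andP[t0 t1]; apply: vmax_le => i; rewrite !mxE.
apply: lerD; apply: ler_wpM2l; rewrite ?subr_ge0 //; exact: le_vmax.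
Qed.

Variables (a b : 'cV[R]_m.+1).

Definition vmax_dq (e : R) := (vmax (a + e *: b) - vmax a) / e.

Lemma vmax_dq_nondecreasing (s t : R) : 0 < s -> s <= t -> vmax_dq s <= vmax_dq t.
Proof.
move=> s0 st; have t0 : 0 < t := lt_le_trans s0 st.
have r01 : 0 <= s / t <= 1.
  by rewrite divr_ge0 ?(ltW s0, ltW t0) //= ler_pdivrMr // mul1r.
have conv := vmax_convex a (a + t *: b) r01.
rewrite /vmax_dq ler_pdivrMr //.
have -> : a + s *: b = (1 - s / t) *: a + (s / t) *: (a + t *: b).
  by apply/matrixP => i j; rewrite !mxE; field; rewrite gt_eqF.
have -> : (vmax (a + t *: b) - vmax a) / t * s
        = s / t * (vmax (a + t *: b) - vmax a) by field; rewrite gt_eqF.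
lra.
Qed.

Lemma vmax_dq_lbound : exists l, forall e, 0 < e -> l <= vmax_dq e.
Proof.
have [k ak] := vmax_attained a; exists (b k 0) => e e0.
rewrite /vmax_dq ler_pdivlMr // ak.
have := le_vmax (a + e *: b) k; rewrite !mxE; lra.
Qed.

Lemma vmax_dq_cvg : cvg (vmax_dq e @[e --> 0^'+])%classic.
Proof.
apply/cvg_ex; eexists; apply: (@nondecreasing_at_right_cvgr _ _ _ (BLeft 1)).
- by rewrite bnd_simp.
- by move=> x y; rewrite !in_itv /= => /andP[x0 _] /andP[y0 _];
    exact: vmax_dq_nondecreasing.
- have [l lb] := vmax_dq_lbound.
  by exists l => _ [x /= + <-]; rewrite in_itv /= => /andP[x0 _]; exact: lb.
Qed.

Lemma vmax_dq_lim_le (t : R) : 0 < t ->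
  lim (vmax_dq e @[e --> 0^'+])%classic <= vmax_dq t.
Proof.
move=> t0; apply: limr_le; first exact: vmax_dq_cvg.
near=> e; apply: vmax_dq_nondecreasing; near: e.
- exact: nbhs_right_gt.
- exact: nbhs_right_le.
Unshelve. all: by end_near. Qed.

End VmaxConvexity.

Definition qcross (R : realType) n (A : 'M[R]_n) (x d : 'cV[R]_n) : R :=
  (d^T *m A *m x) 0 0 + (x^T *m A *m d) 0 0.

Lemma qformDZ (R : realType) n (A : 'M[R]_n) (x d : 'cV[R]_n) (e : R) :
  qform A (x + e *: d) = qform A x + e * qcross A x d + e ^+ 2 * qform A d.
Proof.
rewrite /qform /qcross.
have -> : (x + e *: d)^T = x^T + e *: d^T by apply/matrixP => i j; rewrite !mxE.
rewrite !mulmxDl !mulmxDr -!scalemxAl -!scalemxAr !mxE; ring.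
Qed.

Lemma qformN (R : realType) n (A : 'M[R]_n) (d : 'cV[R]_n) :
  qform A (- d) = qform A d.
Proof.
rewrite /qform; have -> : (- d)^T = - d^T by apply/matrixP => i j; rewrite !mxE.
by rewrite mulNmx mulmxN mulNmx opprK.
Qed.

Section DirectionalDerivative.
Variables (R : realType) (m : nat) (A : 'M[R]_m.+1).

Lemma DA_vmax_dq (x y : 'cV[R]_m.+1) :
  DA A y x = lim (vmax_dq (A *m x) (A *m (y - x)) e @[e --> 0^'+])%classic
             - qcross A x (y - x).
Proof.
set a := A *m x; set b := A *m (y - x).
set c := qcross A x (y - x); set q := qform A (y - x).
set L := lim _.
have dq_cvg := @vmax_dq_cvg _ _ a b.
suff : ((fun e => (fA A ((1 - e) *: x + e *: y) - fA A x) / e) @ 0^'+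
          --> L - (c + 0 * q))%classic.
  by rewrite mul0r addr0 => /(cvg_lim (@norm_hausdorff _ R^o)).
have lin : ((fun e => c + e * q) @ 0^'+ --> c + 0 * q)%classic.
  apply: cvg_at_right_filter; apply: cvgD; first exact: cvg_cst.
  by apply: cvgM; [exact: cvg_id | exact: cvg_cst].
apply: cvg_trans (cvgB dq_cvg lin).
apply: near_eq_cvg; near=> e.
have e0 : e != 0 by rewrite gt_eqF //; near: e; exact: nbhs_right_gt.
have -> : (1 - e) *: x + e *: y = x + e *: (y - x).
  by apply/matrixP => i j; rewrite !mxE; ring.
rewrite /fA qformDZ mulmxDr -scalemxAr -/a -/b /vmax_dq !fctE -/c -/q; field; exact: e0.
Unshelve. all: by end_near. Qed.

Lemma stationary_qcross_le (x y : 'cV[R]_m.+1) :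
  stationary A x -> simplex y ->
  qcross A x (y - x) <= vmax (A *m y) - vmax (A *m x).
Proof.
move=> [_ stat] sy; have := stat y sy.
rewrite DA_vmax_dq subr_ge0 => /le_trans; apply.
have := @vmax_dq_lim_le _ _ (A *m x) (A *m (y - x)) 1 ltr01.
rewrite {2}/vmax_dq divr1 scale1r.
by have -> : A *m x + A *m (y - x) = A *m y by rewrite -mulmxDr addrC subrK.
Qed.

Lemma stationary_fA_lbound (x y : 'cV[R]_m.+1) :
  stationary A x -> simplex y -> fA A x - qform A (y - x) <= fA A y.
Proof.
move=> sx sy; have := stationary_qcross_le sx sy.
have := qformDZ A x (y - x) 1; rewrite scale1r addrC subrK expr1n !mul1r.
rewrite /fA; lra.
Qed.

End DirectionalDerivative.

Lemma simplex_dim_gt0 (R : realType) n (u : 'cV[R]_n) : simplex u -> (0 < n)%N.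
Proof. by case: n u => // u [_]; rewrite big_ord0 => /esym/eqP; rewrite oner_eq0. Qed.

Theorem theorem7 (R : realType) (n : nat) (A : 'M[R]_n) (x1 x2 : 'cV[R]_n) :
  normalized A -> stationary A x1 -> stationary A x2 ->
  `|fA A x1 - fA A x2| <= qform A (x1 - x2).
Proof.
case: n A x1 x2 => [|m] A x1 x2 _ s1 s2; first by have := simplex_dim_gt0 s1.1.
have lb1 := stationary_fA_lbound s1 s2.1.
have lb2 := stationary_fA_lbound s2 s1.1.
rewrite -qformN opprB in lb1.
rewrite ler_norml; apply/andP; split; lra.
Qed.
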